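(* Let $V$ be a real Lorentzian vector space (signature $(1,q)$) of dimension $m=1+q\ge 3$, and let $R$ be an algebraic curvature tensor on $V$. If $\operatorname{trace}\{\mathcal{J}_R(x)^2\}=0$ for every complex null vector $x\in\mathcal{N}$, then $R$ has constant sectional curvature, i.e. there is a constant $c$ with $R(x,y,z,w)=c\{(x,w)(y,z)-(x,z)(y,w)\}$ for all $x,y,z,w\in V$.
   Context: An algebraic curvature tensor is $R\in\otimes^4V^*$ with $R(x,y,z,w)=R(z,w,x,y)=-R(y,x,z,w)$ and $R(x,y,z,w)+R(y,z,x,w)+R(z,x,y,w)=0$. The Jacobi operator $\mathcal{J}_R(x)$ is defined by $(\mathcal{J}_R(x)y,w)=R(y,x,x,w)$. The inner product, $R$ and $\mathcal{J}_R$ are extended complex-multilinearly to $V_{\mathbb{C}}=V\otimes\mathbb{C}$; $\mathcal{N}=\{v\in V_{\mathbb{C}}:(v,v)=0\}$. *)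

From HB Require Import structures.
From mathcomp Require Import all_boot all_order all_algebra.
From mathcomp Require Import reals.
From mathcomp Require Import complex.
Set Implicit Arguments. Unset Strict Implicit. Unset Printing Implicit Defensive.
Import Order.TTheory GRing.Theory Num.Theory.
Local Open Scope ring_scope.

(* The Lorentzian space V = R^m with orthonormal basis e_0,...,e_(m-1),
   metric (x,y) = - x_0 y_0 + sum_(i>0) x_i y_i  (signature (1,q), q = m-1).
   Vectors are row vectors 'rV[K]_m over K = R (real) or K = R[i] (complexified). *)

Definition eta (m : nat) (i : 'I_m) : int := if val i == 0%N then -1 else 1.

(* complex-bilinear (NOT hermitian) extension of the Lorentzian inner product *)
Definition lip (K : comRingType) (m : nat) (x y : 'rV[K]_m) : K :=
  \sum_(i < m) (eta i)%:~R * x 0 i * y 0 i.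

Definition tensor4 (R : realType) (m : nat) := 'I_m -> 'I_m -> 'I_m -> 'I_m -> R.

Definition tev (R : realType) (K : comRingType) (f : {rmorphism R -> K}) (m : nat)
  (T : tensor4 R m) (x y z w : 'rV[K]_m) : K :=
  \sum_(i < m) \sum_(j < m) \sum_(k < m) \sum_(l < m)
     f (T i j k l) * x 0 i * y 0 j * z 0 k * w 0 l.

Definition Rev (R : realType) (m : nat) (T : tensor4 R m) (x y z w : 'rV[R]_m) : R :=
  tev idfun T x y z w.

Definition RevC (R : realType) (m : nat) (T : tensor4 R m) (x y z w : 'rV[R[i]]_m) : R[i] :=
  tev (GRing.RMorphism.clone _ _ (@real_complex R) _) T x y z w.

Definition is_acurv (R : realType) (m : nat) (T : tensor4 R m) : Prop :=
  forall x y z w : 'rV[R]_m,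
    [/\ Rev T x y z w = Rev T z w x y,
        Rev T x y z w = - Rev T y x z w
      & Rev T x y z w + Rev T y z x w + Rev T z x y w = 0].

(* Jacobi operator J_R(x) on V_C, as the matrix acting on column coordinates:
   (J_R(x) y, w) = R(y,x,x,w), i.e. (J_R(x) e_b)_a = eta_a R(e_b,x,x,e_a). *)
Definition jacobiC (R : realType) (m : nat) (T : tensor4 R m) (x : 'rV[R[i]]_m)
  : 'M[R[i]]_m :=
  \matrix_(a < m, b < m) ((eta a)%:~R * RevC T (delta_mx 0 b) x x (delta_mx 0 a)).

Definition nullC (R : realType) (m : nat) (x : 'rV[R[i]]_m) : Prop := lip x x = 0.

(* For a real null x != 0 let M be the symmetric matrix
   of w, w' |-> R(w, x, x, w'); then J_R(x) = G M with G = diag(-1, 1, ..., 1), and x M = 0.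
   The Euclidean orthogonal projection P onto {x, Gx}^perp kills e_0 (as x - Gx = 2 x_0 e_0),
   so G P = P G = P, and N = P M P is symmetric with tr N^2 = tr (G M)^2 = tr J_R(x)^2 = 0.
   Hence N = 0, i.e. R(w, x, x, w') = 0 whenever w and w' are orthogonal to x and Gx.
   The constant curvature tensor R_0 shares this property, hence so does the algebraic
   curvature tensor Q = R - c R_0, where c is chosen so that Q(e_1, e_0, e_0, e_1) = 0.
   Evaluating Q on the null vectors e_0 +- e_p and 5 e_0 +- (3 e_p + 4 e_r) then forces every
   component of Q to vanish. *)

From Pilot Require Import Defs.
From HB Require Import structures.
From mathcomp Require Import all_boot all_order all_algebra.
From mathcomp Require Import reals.
From mathcomp Require Import complex.
From mathcomp Require Import ring lra.
Import Order.TTheory GRing.Theory Num.Theory.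
Set Implicit Arguments. Unset Strict Implicit.
Local Open Scope ring_scope.

Section Multilinearity.
Variables (R : realType) (m : nat) (T : tensor4 R m).
Implicit Types (a : R) (x y z w : 'rV[R]_m).

Ltac linear_in_components := rewrite /Rev /tev /=;
  do 4 (rewrite mulr_sumr -big_split; apply: eq_bigr => ? _); rewrite !mxE /=; ring.

Lemma Rev_linear1 a x x' y z w :
  Rev T (a *: x + x') y z w = a * Rev T x y z w + Rev T x' y z w.
Proof. linear_in_components. Qed.
Lemma Rev_linear4 a x x' y z w :
  Rev T y z w (a *: x + x') = a * Rev T y z w x + Rev T y z w x'.
Proof. linear_in_components. Qed.

Lemma Rev_expand1 x y z w :
  Rev T x y z w = \sum_i x 0 i * Rev T (delta_mx 0 i) y z w.
Proof.
rewrite {1}(row_sum_delta x); elim/big_rec2: _ => [|i s1 s2 _ <-].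
  by have := Rev_linear1 1 0 0 y z w; rewrite scale1r addr0; lra.
by rewrite Rev_linear1.
Qed.
Lemma Rev_expand4 x y z w :
  Rev T x y z w = \sum_i w 0 i * Rev T x y z (delta_mx 0 i).
Proof.
rewrite {1}(row_sum_delta w); elim/big_rec2: _ => [|i s1 s2 _ <-].
  by have := Rev_linear4 1 0 0 x y z; rewrite scale1r addr0; lra.
by rewrite Rev_linear4.
Qed.

Lemma acurv_sym14 : is_acurv T -> forall x y z w, Rev T x y z w = Rev T w z y x.
Proof.
move=> hT x y z w.
have [-> _ _] := hT x y z w; have [_ -> _] := hT z w x y.
have [-> _ _] := hT w z x y; have [_ -> _] := hT x y w z.
by have [-> _ _] := hT y x w z; rewrite opprK.
Qed.

End Multilinearity.

Section DiagonalForm.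
Variables (R : comPzRingType) (m : nat) (d : 'I_m -> R).
Implicit Types (a : R) (x y : 'rV[R]_m).

Definition diag_form x y := \sum_i d i * x 0 i * y 0 i.

Lemma diag_formDl a x x' y : diag_form (a *: x + x') y = a * diag_form x y + diag_form x' y.
Proof. rewrite /diag_form mulr_sumr -big_split; apply: eq_bigr => i _; rewrite !mxE /=; ring. Qed.
Lemma diag_formDr a x x' y : diag_form y (a *: x + x') = a * diag_form y x + diag_form y x'.
Proof. rewrite /diag_form mulr_sumr -big_split; apply: eq_bigr => i _; rewrite !mxE /=; ring. Qed.
Lemma diag_formZl a x y : diag_form (a *: x) y = a * diag_form x y.
Proof. rewrite /diag_form mulr_sumr; apply: eq_bigr => i _; rewrite !mxE /=; ring. Qed.
Lemma diag_formZr a x y : diag_form y (a *: x) = a * diag_form y x.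
Proof. rewrite /diag_form mulr_sumr; apply: eq_bigr => i _; rewrite !mxE /=; ring. Qed.
Lemma diag_formC x y : diag_form x y = diag_form y x.
Proof. by apply: eq_bigr => i _; ring. Qed.

Lemma diag_form_deltal i y : diag_form (delta_mx 0 i) y = d i * y 0 i.
Proof.
rewrite /diag_form (bigD1 i) //= big1 => [|k /negbTE ki]; last by rewrite !mxE ki mulr0 mul0r.
by rewrite !mxE !eqxx mulr1 addr0.
Qed.

Lemma diag_form_delta i j :
  diag_form (delta_mx 0 i) (delta_mx 0 j) = if i == j then d i else 0.
Proof. by rewrite diag_form_deltal mxE eqxx eq_sym; case: eqP; rewrite ?mulr1 ?mulr0. Qed.

Lemma diag_form_mx x y : diag_form x y = (x *m diag_mx (\row_i d i) *m y^T) 0 0.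
Proof. rewrite /diag_form !mxE; apply: eq_bigr => i _; rewrite mul_mx_diag !mxE; ring. Qed.

End DiagonalForm.

Section LorentzMetric.
Variables (R : realType) (n : nat).
Local Notation m := n.+1.
Local Notation eta i := ((Defs.eta i)%:~R : R).
Implicit Types (x y : 'rV[R]_m).

Lemma lip_diag_form x y : lip x y = diag_form (fun i => eta i) x y.
Proof. by []. Qed.

Lemma lipC x y : lip x y = lip y x.
Proof. by rewrite !lip_diag_form diag_formC. Qed.

Definition dot x y := diag_form (fun _ => 1) x y.

Lemma eta0 : eta (ord0 : 'I_m) = -1. Proof. by []. Qed.
Lemma eta_neq0 (i : 'I_m) : i != ord0 -> eta i = 1.
Proof. by rewrite /Defs.eta; case: i => [[|k] Hk]. Qed.

Definition Gm : 'M[R]_m := diag_mx (\row_i eta i).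

Lemma Gm_invol : Gm *m Gm = 1%:M.
Proof.
apply/matrixP => i j; rewrite mul_mx_diag !mxE.
case: eqP => [<-|_]; last by rewrite mulr0n mul0r.
by case: (i =P ord0) => [->|/eqP/eta_neq0 ->]; rewrite ?eta0 ?mulrNN mulr1.
Qed.

Lemma tr_Gm : Gm^T = Gm. Proof. exact: tr_diag_mx. Qed.

Lemma lip_mx x y : lip x y = (x *m Gm *m y^T) 0 0.
Proof. exact: diag_form_mx. Qed.
Lemma dot_mx x y : dot x y = (x *m y^T) 0 0.
Proof. rewrite /dot /diag_form !mxE; apply: eq_bigr => i _; rewrite !mxE; ring. Qed.

Lemma dot_scalar_mx x y : x *m y^T = (dot x y)%:M.
Proof. by rewrite [LHS]mx11_scalar -dot_mx. Qed.
Lemma lip_scalar_mx x y : x *m Gm *m y^T = (lip x y)%:M.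
Proof. by rewrite [LHS]mx11_scalar -lip_mx. Qed.

Lemma null_dot x : lip x x = 0 -> dot x x = 2 * (x 0 ord0 * x 0 ord0).
Proof.
move=> x_null; rewrite -[dot x x]subr0 -x_null /dot lip_diag_form /diag_form -sumrB.
rewrite (bigD1 ord0) //= big1 => [|i /eta_neq0 ->]; last by rewrite !mul1r subrr.
by rewrite eta0; ring.
Qed.

End LorentzMetric.

Lemma sym_mxtrace_sqr_eq0 (R : realDomainType) k (N : 'M[R]_k) :
  N^T = N -> \tr (N *m N) = 0 -> N = 0.
Proof.
move=> NT trNN; have sumN : \sum_i \sum_j N i j ^+ 2 = 0.
  rewrite -[RHS]trNN /mxtrace; apply: eq_bigr => i _; rewrite mxE; apply: eq_bigr => j _.
  by rewrite expr2 -{2}NT mxE.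
apply/matrixP => i j; rewrite mxE; apply/eqP; rewrite -sqrf_eq0; apply/eqP.
have row_i := psumr_eq0P (fun k _ => sumr_ge0 _ (fun l _ => sqr_ge0 (N k l))) sumN (i:=i) isT.
exact: (psumr_eq0P (fun l _ => sqr_ge0 (N i l)) row_i (i:=j) isT).
Qed.

Section NullProjector.
Variables (R : realType) (n : nat) (x : 'rV[R]_n.+1).
Hypotheses (x_null : lip x x = 0) (x_neq0 : dot x x != 0).
Local Notation G := (Gm R n).
Local Notation s := (dot x x).
Local Notation X := (x^T *m x).
Local Notation eta i := ((Defs.eta i)%:~R : R).

(* x and Gx are Euclidean-orthogonal of squared norm s, so s^-1 (X + G X G) is the
   projection onto their span. *)
Definition null_proj : 'M[R]_n.+1 := 1%:M - s^-1 *: (X + G *m X *m G).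
Local Notation P := null_proj.

Lemma tr_null_proj : P^T = P.
Proof.
by rewrite /P linearB linearZ /= linearD /= !trmx_mul trmxK tr_Gm trmx1 mulmxA.
Qed.

Lemma null_proj_entry i j :
  P i j = (i == j)%:R - s^-1 * ((1 + eta i * eta j) * (x 0 i * x 0 j)).
Proof.
rewrite /P /Gm mul_mx_diag mul_diag_mx !mxE !big_ord1 !mxE.
by congr (_ - _ * _); ring.
Qed.

Lemma null_proj_col0 i : P i ord0 = 0.
Proof.
rewrite null_proj_entry eta0; case: (i =P ord0) => [->|/eqP/eta_neq0 ->].
  have -> : (1 + -1 * -1) * (x 0 ord0 * x 0 ord0) = s.
    by rewrite null_dot //; ring.
  by rewrite mulVf // subrr.
by rewrite /=; ring.
Qed.

Lemma null_projG : P *m G = P.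
Proof.
apply/matrixP => i j; rewrite /Gm mul_mx_diag [LHS]mxE.
have -> : (\row_k eta k) 0 j = eta j by rewrite mxE.
by case: (j =P ord0) => [->|/eqP/eta_neq0 ->]; rewrite ?null_proj_col0 ?mul0r ?mulr1.
Qed.

Lemma Gnull_proj : G *m P = P.
Proof. by rewrite -[LHS]trmxK trmx_mul tr_null_proj tr_Gm null_projG tr_null_proj. Qed.

Lemma null_proj_idem : P *m P = P.
Proof.
set A := X + G *m X *m G.
have XX : X *m X = s *: X by rewrite mulmxA -(mulmxA _ x) dot_scalar_mx mul_mx_scalar scalemxAl.
have XGX : X *m G *m X = 0.
  by rewrite !mulmxA -(mulmxA _ x) -(mulmxA _ (x *m G)) lip_scalar_mx x_null raddf0 mulmx0 mul0mx.
have AA : A *m A = s *: A.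
  rewrite /A mulmxDl !mulmxDr.
  have -> : X *m (G *m X *m G) = X *m G *m X *m G by rewrite !mulmxA.
  have -> : G *m X *m G *m X = G *m (X *m G *m X) by rewrite !mulmxA.
  have -> : G *m X *m G *m (G *m X *m G) = G *m (X *m X) *m G.
    by rewrite -!mulmxA (mulmxA G G) Gm_invol mul1mx.
  by rewrite XGX XX mulmx0 mul0mx addr0 add0r -scalemxAr -scalemxAl scalerDr.
rewrite /P -/A mulmxBl !mulmxBr !mul1mx mulmx1 -scalemxAl -scalemxAr AA !scalerA.
by rewrite -mulrA mulVf // mulr1 subrr subr0.
Qed.

Lemma null_proj_fix v : dot x v = 0 -> lip x v = 0 -> P *m v^T = v^T.
Proof.
move=> dv lv.
have Xv : X *m v^T = 0 by rewrite -mulmxA dot_scalar_mx dv raddf0 mulmx0.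
have GXGv : G *m X *m G *m v^T = 0.
  by rewrite -!mulmxA (mulmxA x) lip_scalar_mx lv raddf0 !mulmx0.
by rewrite /P mulmxBl mul1mx -scalemxAl mulmxDl Xv GXGv addr0 scaler0 subr0.
Qed.

Lemma mxtrace_null_proj M : M^T = M -> x *m M = 0 ->
  \tr (M *m P *m M *m P) = \tr (G *m M *m G *m M).
Proof.
move=> MT xM.
have Mx : M *m x^T = 0 by rewrite -{1}MT -trmx_mul xM trmx0.
have MP : M *m P = M *m G - s^-1 *: (M *m G *m X).
  have AG : (X + G *m X *m G) *m G = X *m G + G *m X.
    by rewrite mulmxDl -(mulmxA _ G G) Gm_invol mulmx1.
  rewrite -{1}null_projG /P mulmxBl mul1mx mulmxBr -scalemxAl -scalemxAr AG.
  by rewrite mulmxDr !mulmxA Mx !mul0mx add0r.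
have MGXMG : M *m G *m X *m (M *m G) = 0.
  by rewrite !mulmxA -(mulmxA _ x M) xM mulmx0 !mul0mx.
have trMGMGX : \tr (M *m G *m (M *m G *m X)) = 0.
  by rewrite !mulmxA mxtrace_mulC !mulmxA xM !mul0mx mxtrace0.
rewrite -(mulmxA (M *m P)) MP mulmxBl !mulmxBr -!scalemxAl -!scalemxAr.
rewrite (mulmxA (M *m G *m X) (M *m G) X) MGXMG mul0mx !scaler0 !subr0.
by rewrite linearB /= mxtraceZ trMGMGX mulr0 subr0 !mulmxA mxtrace_mulC !mulmxA.
Qed.

Lemma null_complement_form_eq0 M : M^T = M -> x *m M = 0 ->
    \tr (G *m M *m G *m M) = 0 ->
  forall w w', dot x w = 0 -> lip x w = 0 -> dot x w' = 0 -> lip x w' = 0 ->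
  (w *m M *m w'^T) 0 0 = 0.
Proof.
move=> MT xM trGM w w' dw lw dw' lw'.
set N := P *m M *m P.
have N0 : N = 0.
  apply: sym_mxtrace_sqr_eq0; first by rewrite /N !trmx_mul tr_null_proj MT mulmxA.
  rewrite -trGM -mxtrace_null_proj // /N !mulmxA -(mulmxA _ P P) null_proj_idem.
  by rewrite mxtrace_mulC !mulmxA null_proj_idem -!mulmxA mxtrace_mulC !mulmxA.
have wP : w *m P = w.
  by rewrite -[LHS]trmxK trmx_mul tr_null_proj null_proj_fix // trmxK.
rewrite -wP -(null_proj_fix dw' lw') !mulmxA.
have -> : w *m P *m M *m P = w *m N by rewrite /N !mulmxA.
by rewrite N0 mulmx0 mul0mx mxE.
Qed.

End NullProjector.

Section JacobiOperator.
Variables (R : realType) (n : nat) (T : tensor4 R n.+1).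
Local Notation m := n.+1.
Local Notation f := (real_complex R).
Implicit Types (x y z w : 'rV[R]_m).

Definition jacobi_form x : 'M[R]_m :=
  \matrix_(a, b) Rev T (delta_mx 0 a) x x (delta_mx 0 b).

Lemma jacobi_formE x w w' : (w *m jacobi_form x *m w'^T) 0 0 = Rev T w x x w'.
Proof.
rewrite mxE (Rev_expand4 T w x x w'); apply: eq_bigr => b _.
rewrite !mxE mulrC (Rev_expand1 T w); congr (_ * _); apply: eq_bigr => a _.
by rewrite !mxE.
Qed.

Lemma RevC_map x y z w :
  RevC T (map_mx f x) (map_mx f y) (map_mx f z) (map_mx f w) = f (Rev T x y z w).
Proof.
rewrite /RevC /Rev /tev /= !rmorph_sum; apply: eq_bigr => i _.
rewrite !rmorph_sum; apply: eq_bigr => j _.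
rewrite !rmorph_sum; apply: eq_bigr => k _.
rewrite !rmorph_sum; apply: eq_bigr => l _.
by rewrite !rmorphM !mxE.
Qed.

Lemma lip_map x y : lip (map_mx f x) (map_mx f y) = f (lip x y).
Proof.
by rewrite /lip rmorph_sum; apply: eq_bigr => i _; rewrite !rmorphM !mxE rmorph_int.
Qed.

Hypothesis hT : is_acurv T.

Lemma tr_jacobi_form x : (jacobi_form x)^T = jacobi_form x.
Proof. by apply/matrixP => a b; rewrite !mxE acurv_sym14. Qed.

Lemma jacobi_form_kernel x : x *m jacobi_form x = 0.
Proof.
apply/matrixP => i b; rewrite (ord1 i) !mxE.
transitivity (Rev T x x x (delta_mx 0 b)).
  by rewrite (Rev_expand1 T x); apply: eq_bigr => a _; rewrite mxE.
have [_ h _] := hT x x x (delta_mx 0 b); lra.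
Qed.

Lemma jacobiC_map x : jacobiC T (map_mx f x) = map_mx f (Gm R n *m jacobi_form x).
Proof.
apply/matrixP => a b; rewrite /jacobiC /Gm mul_diag_mx !mxE.
rewrite -(map_delta_mx f 0 b) -(map_delta_mx f 0 a) RevC_map.
by rewrite rmorphM rmorph_int acurv_sym14.
Qed.

Lemma acurv_null_vanishing :
    (forall xc : 'rV[R[i]]_m, nullC xc -> \tr (jacobiC T xc *m jacobiC T xc) = 0) ->
  forall x w w', lip x x = 0 -> dot x x != 0 ->
  dot x w = 0 -> lip x w = 0 -> dot x w' = 0 -> lip x w' = 0 -> Rev T w x x w' = 0.
Proof.
move=> trJ2 x w w' x_null x_neq0 dw lw dw' lw'.
rewrite -jacobi_formE; apply: (null_complement_form_eq0 x_null x_neq0) => //.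
- exact: tr_jacobi_form.
- exact: jacobi_form_kernel.
apply: (fmorph_inj f); rewrite rmorph0 -trace_map_mx -mulmxA map_mxM -jacobiC_map.
by rewrite trJ2 // /nullC lip_map x_null rmorph0.
Qed.

End JacobiOperator.

Lemma row_linear_eq0 (R : pzRingType) m (f : 'rV[R]_m -> R) :
    (forall a x y, f (a *: x + y) = a * f x + f y) -> (forall i, f (delta_mx 0 i) = 0) ->
  forall x, f x = 0.
Proof.
move=> f_lin f_e x; rewrite (row_sum_delta x); elim/big_rec: _ => [|i s _ fs0].
  by have := f_lin (-1) 0 0; rewrite scaleN1r oppr0 addr0 mulN1r addNr.
by rewrite f_lin f_e fs0 mulr0 addr0.
Qed.

Section NullVanishingForms.
Variables (R : realType) (n : nat).
Local Notation m := n.+1.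
Local Notation V := 'rV[R]_m.
Variable Q : V -> V -> V -> V -> R.
Hypothesis Q_linear1 :
  forall a (x x' y z w : V), Q (a *: x + x') y z w = a * Q x y z w + Q x' y z w.
Hypothesis Q_pair : forall x y z w : V, Q x y z w = Q z w x y.
Hypothesis Q_anti : forall x y z w : V, Q x y z w = - Q y x z w.
Hypothesis Q_bianchi : forall x y z w : V, Q x y z w + Q y z x w + Q z x y w = 0.
Hypothesis Q_null : forall x w w' : V, lip x x = 0 -> dot x x != 0 ->
  dot x w = 0 -> lip x w = 0 -> dot x w' = 0 -> lip x w' = 0 -> Q w x x w' = 0.

Local Notation e i := (@delta_mx R 1 m 0 i).
Local Notation o := (@ord0 n).
Local Notation q a b c d := (Q (e a) (e b) (e c) (e d)).

Lemma Q_linear2 a x x' y z w : Q y (a *: x + x') z w = a * Q y x z w + Q y x' z w.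
Proof. by rewrite Q_anti Q_linear1 (Q_anti x) (Q_anti x'); ring. Qed.
Lemma Q_linear3 a x x' y z w : Q y z (a *: x + x') w = a * Q y z x w + Q y z x' w.
Proof. by rewrite Q_pair Q_linear1 !(Q_pair _ w). Qed.
Lemma Q_linear4 a x x' y z w : Q y z w (a *: x + x') = a * Q y z w x + Q y z w x'.
Proof. by rewrite Q_pair Q_linear2 !(Q_pair w). Qed.

Lemma QZ1 a x y z w : Q (a *: x) y z w = a * Q x y z w.
Proof.
have Q0 : Q 0 y z w = 0 by have := Q_linear1 1 0 0 y z w; rewrite scale1r addr0 mul1r; lra.
by rewrite -[a *: x]addr0 Q_linear1 Q0 addr0.
Qed.
Lemma QZ2 a x y z w : Q y (a *: x) z w = a * Q y x z w.
Proof. by rewrite Q_anti QZ1 (Q_anti x) mulrN opprK. Qed.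
Lemma QZ3 a x y z w : Q y z (a *: x) w = a * Q y z x w.
Proof. by rewrite Q_pair QZ1 Q_pair. Qed.
Lemma QZ4 a x y z w : Q y z w (a *: x) = a * Q y z w x.
Proof. by rewrite Q_pair QZ2 Q_pair. Qed.

Lemma Q_anti34 x y z w : Q x y z w = - Q x y w z.
Proof. by rewrite Q_pair Q_anti Q_pair. Qed.
Lemma Q_rev x y z w : Q x y z w = Q w z y x.
Proof. by rewrite Q_pair Q_anti Q_anti34 opprK Q_pair. Qed.
Lemma Q_xx x z w : Q x x z w = 0.
Proof. by have := Q_anti x x z w; lra. Qed.
Lemma Q_zz x y z : Q x y z z = 0.
Proof. by have := Q_anti34 x y z z; lra. Qed.

Ltac simpl_idx := repeat match goal with
  | |- context [?i == ?i] => rewrite eqxx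
  | H : is_true (?i != ?j) |- context [?i == ?j] => rewrite (negbTE H)
  | H : is_true (?i != ?j) |- context [?j == ?i] => rewrite [j == i]eq_sym (negbTE H)
  | H : is_true (?i != ord0) |- context [Defs.eta ?i] => rewrite (eta_neq0 _ H)
  | |- context [Defs.eta ord0] => rewrite eta0
  end; rewrite /=.

Ltac neq := first [done | by rewrite eq_sym].

Ltac expand_forms := rewrite /dot ?lip_diag_form
  ?(diag_formDl, diag_formDr, diag_formZl, diag_formZr) ?diag_form_delta ?diag_form_deltal;
  simpl_idx.

Lemma null_axis (p s t : 'I_m) : p != o -> s != o -> t != o -> s != p -> t != p ->
  q s o o t + q s p p t = 0 /\ q s o p t + q s p o t = 0.
Proof.
move=> p0 s0 t0 sp tp.
have null_dir a : a ^+ 2 = 1 -> Q (e s) (1 *: e o + a *: e p) (1 *: e o + a *: e p) (e t) = 0.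
  move=> a2; apply: Q_null; expand_forms; try apply/eqP; nra.
have := null_dir 1 (expr1n _ 2); have := null_dir (-1) (sqrr_sign _ 1).
rewrite !(Q_linear2, Q_linear3, QZ2, QZ3); split; lra.
Qed.

(* In dimension 3 there is no spare spatial axis to feed [null_axis]; the null vectors
   5 e_0 +- (3 e_p + 4 e_r) take its place. *)
Lemma null_diag (p r : 'I_m) (w w' : V) : p != o -> r != o -> p != r ->
    w 0 o = 0 -> 3 * w 0 p + 4 * w 0 r = 0 ->
    w' 0 o = 0 -> 3 * w' 0 p + 4 * w' 0 r = 0 ->
  25 * Q w (e o) (e o) w' + 9 * Q w (e p) (e p) w' + 16 * Q w (e r) (e r) w'
    + 12 * (Q w (e p) (e r) w' + Q w (e r) (e p) w') = 0.
Proof.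
move=> p0 r0 pr w0 wpr w'0 w'pr.
have null_dir a : a ^+ 2 = 1 ->
    Q w (5 *: e o + ((3 * a) *: e p + (4 * a) *: e r))
        (5 *: e o + ((3 * a) *: e p + (4 * a) *: e r)) w' = 0.
  by move=> a2; apply: Q_null; expand_forms; try apply/eqP; nra.
have := null_dir 1 (expr1n _ 2); have := null_dir (-1) (sqrr_sign _ 1).
rewrite !(Q_linear2, Q_linear3, QZ2, QZ3); lra.
Qed.

Variable j : 'I_m.
Hypotheses (j0 : j != o) (q_j00j : q j o o j = 0).

Lemma q_a00a (a : 'I_m) : a != o -> q a o o a = 0.
Proof.
move=> a0; have [->//|aj] := eqVneq a j; have ja : j != a by rewrite eq_sym.
have [h1 _] := null_axis j0 a0 a0 aj aj; have [h2 _] := null_axis a0 j0 j0 ja ja.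
by rewrite q_j00j in h2; have := Q_pair (e a) (e j) (e j) (e a); lra.
Qed.

Lemma q_abba_space (a b : 'I_m) : a != o -> b != o -> a != b -> q a b b a = 0.
Proof. by move=> a0 b0 ab; have [h _] := null_axis b0 a0 a0 ab ab; have := q_a00a a0; lra. Qed.

Lemma q_abba (a b : 'I_m) : a != b -> q a b b a = 0.
Proof.
move=> ab; have [a0|a0] := eqVneq a o; first by subst a; rewrite Q_pair q_a00a; neq.
have [b0|b0] := eqVneq b o; first by subst b; rewrite q_a00a.
exact: q_abba_space.
Qed.

Lemma q_a00c (a c : 'I_m) : a != o -> c != o -> a != c -> q a o o c = 0.
Proof.
move=> a0 c0 ac; have ca : c != a by rewrite eq_sym.
set w := 4 *: e a + (-3) *: e c.
have w0 : w 0 o = 0 by rewrite !mxE; simpl_idx; ring.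
have wac : 3 * w 0 a + 4 * w 0 c = 0 by rewrite !mxE; simpl_idx; ring.
have := null_diag a0 c0 ac w0 wac w0 wac.
rewrite /w !(Q_linear1, Q_linear4, QZ1, QZ4) !(Q_xx, Q_zz).
have := q_abba ac; have := q_abba ca; have := Q_rev (e c) (e o) (e o) (e a).
have := Q_anti34 (e a) (e c) (e a) (e c); have := Q_anti34 (e c) (e a) (e c) (e a).
by have := q_a00a a0; have := q_a00a c0; lra.
Qed.

Lemma q_0bba (a b : 'I_m) : a != o -> b != o -> a != b -> q o b b a = 0.
Proof.
move=> a0 b0 ab; have ba : b != a by rewrite eq_sym.
have [_ h] := null_axis a0 b0 b0 ba ba.
have := Q_anti (e b) (e o) (e a) (e b); have := Q_anti34 (e o) (e b) (e a) (e b).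
by have := Q_pair (e b) (e a) (e o) (e b); lra.
Qed.

Lemma q_abbc_space (a b c : 'I_m) : a != o -> b != o -> c != o ->
  a != b -> b != c -> a != c -> q a b b c = 0.
Proof.
move=> a0 b0 c0 ab bc ac; have cb : c != b by rewrite eq_sym.
by have [h _] := null_axis b0 a0 c0 ab cb; have := q_a00c a0 c0 ac; lra.
Qed.

Lemma q_abbc (a b c : 'I_m) : a != b -> b != c -> a != c -> q a b b c = 0.
Proof.
move=> ab bc ac.
have [b0|b0] := eqVneq b o; first by subst b; rewrite q_a00c; neq.
have [a0|a0] := eqVneq a o; first by subst a; rewrite q_0bba; neq.
have [c0|c0] := eqVneq c o; first by subst c; rewrite Q_rev q_0bba; neq.
exact: q_abbc_space.
Qed.

Lemma q_a0cd (a c d : 'I_m) : a != o -> c != o -> d != o ->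
  a != c -> c != d -> a != d -> q a o c d = 0.
Proof.
move=> a0 c0 d0 ac cd ad; have ca : c != a by rewrite eq_sym.
have dc : d != c by rewrite eq_sym. have da : d != a by rewrite eq_sym.
have [_ h1] := null_axis c0 a0 d0 ac dc; have [_ h2] := null_axis a0 c0 d0 ca da.
have := Q_bianchi (e a) (e o) (e c) (e d); have := Q_anti (e o) (e c) (e a) (e d).
by have := Q_anti (e a) (e c) (e o) (e d); lra.
Qed.

Lemma q_abcd_swap_space (a b c d : 'I_m) : a != o -> b != o -> c != o -> d != o ->
    a != b -> a != c -> a != d -> b != c -> b != d -> c != d ->
  q a b c d + q a c b d = 0.
Proof.
move=> a0 b0 c0 d0 ab ac ad bc bd cd.
have a_o : e a 0 o = 0 by rewrite mxE; simpl_idx.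
have a_bc : 3 * e a 0 b + 4 * e a 0 c = 0 by rewrite !mxE; simpl_idx; ring.
have d_o : e d 0 o = 0 by rewrite mxE; simpl_idx.
have d_bc : 3 * e d 0 b + 4 * e d 0 c = 0 by rewrite !mxE; simpl_idx; ring.
have := null_diag b0 c0 bc a_o a_bc d_o d_bc.
have := q_a00c a0 d0 ad; have := q_abbc_space a0 b0 d0 ab bd ad.
by have := q_abbc_space a0 c0 d0 ac cd ad; lra.
Qed.

Lemma q_abcd_space (a b c d : 'I_m) : a != o -> b != o -> c != o -> d != o ->
    a != b -> a != c -> a != d -> b != c -> b != d -> c != d ->
  q a b c d = 0.
Proof.
move=> a0 b0 c0 d0 ab ac ad bc bd cd.
have ba : b != a by rewrite eq_sym. have ca : c != a by rewrite eq_sym.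
have cb : c != b by rewrite eq_sym.
have := q_abcd_swap_space a0 b0 c0 d0 ab ac ad bc bd cd.
have := q_abcd_swap_space c0 b0 a0 d0 cb ca cd ba bd ad.
have := Q_bianchi (e a) (e b) (e c) (e d); have := Q_anti (e b) (e c) (e a) (e d).
by have := Q_anti (e c) (e a) (e b) (e d); lra.
Qed.

Lemma q_abcd (a b c d : 'I_m) : a != b -> a != c -> a != d -> b != c -> b != d -> c != d ->
  q a b c d = 0.
Proof.
move=> ab ac ad bc bd cd.
have [a0|a0] := eqVneq a o; first by subst a; rewrite Q_anti q_a0cd ?oppr0; neq.
have [b0|b0] := eqVneq b o; first by subst b; rewrite q_a0cd; neq.
have [c0|c0] := eqVneq c o; first by subst c; rewrite Q_pair Q_anti q_a0cd ?oppr0; neq.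
have [d0|d0] := eqVneq d o; first by subst d; rewrite Q_pair q_a0cd; neq.
by apply: q_abcd_space.
Qed.

Lemma q_eq0 (a b c d : 'I_m) : q a b c d = 0.
Proof.
have [<-|ab] := eqVneq a b; first exact: Q_xx.
have [<-|cd] := eqVneq c d; first exact: Q_zz.
have [?|ac] := eqVneq a c; first subst c.
  have [<-|bd] := eqVneq b d; first by rewrite Q_anti34 q_abba ?oppr0.
  by rewrite Q_anti34 Q_pair q_abbc ?oppr0; neq.
have [?|ad] := eqVneq a d; first subst d.
  have [<-|bc] := eqVneq b c; first exact: q_abba ab.
  by rewrite Q_pair q_abbc; neq.
have [?|bc] := eqVneq b c; first by subst c; apply: q_abbc.
have [?|bd] := eqVneq b d; first by subst d; rewrite Q_anti34 q_abbc ?oppr0; neq.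
by apply: q_abcd.
Qed.

Lemma Q_eq0 x y z w : Q x y z w = 0.
Proof.
move: x; apply: row_linear_eq0 => [a x x'|a]; first exact: Q_linear1.
move: y; apply: row_linear_eq0 => [b y y'|b]; first exact: Q_linear2.
move: z; apply: row_linear_eq0 => [c z z'|c]; first exact: Q_linear3.
move: w; apply: row_linear_eq0 => [d w w'|d]; first exact: Q_linear4.
exact: q_eq0.
Qed.

End NullVanishingForms.

Section CurvatureDefect.
Variables (R : realType) (n : nat) (T : tensor4 R n.+1) (c : R).
Local Notation V := 'rV[R]_n.+1.
Implicit Types (x y z w : V).

Definition const_curv x y z w := lip x w * lip y z - lip x z * lip y w.

Definition curv_defect x y z w := Rev T x y z w - c * const_curv x y z w.

Lemma curv_defect_linear1 a x x' y z w :
  curv_defect (a *: x + x') y z w = a * curv_defect x y z w + curv_defect x' y z w.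
Proof. by rewrite /curv_defect /const_curv Rev_linear1 !lip_diag_form !diag_formDl; ring. Qed.

Hypothesis hT : is_acurv T.

Lemma curv_defect_pair x y z w : curv_defect x y z w = curv_defect z w x y.
Proof.
have [pair _ _] := hT x y z w.
by rewrite /curv_defect /const_curv pair (lipC z y) (lipC w x) (lipC z x) (lipC w y); ring.
Qed.

Lemma curv_defect_anti x y z w : curv_defect x y z w = - curv_defect y x z w.
Proof. by have [_ anti _] := hT x y z w; rewrite /curv_defect /const_curv anti; ring. Qed.

Lemma curv_defect_bianchi x y z w :
  curv_defect x y z w + curv_defect y z x w + curv_defect z x y w = 0.
Proof.
have [_ _ bianchi] := hT x y z w; rewrite /curv_defect /const_curv.
rewrite (lipC y x) (lipC z x) (lipC z y) -[RHS]bianchi; ring.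
Qed.

Lemma curv_defect_null :
    (forall x w w', lip x x = 0 -> dot x x != 0 ->
      dot x w = 0 -> lip x w = 0 -> dot x w' = 0 -> lip x w' = 0 -> Rev T w x x w' = 0) ->
  forall x w w', lip x x = 0 -> dot x x != 0 ->
  dot x w = 0 -> lip x w = 0 -> dot x w' = 0 -> lip x w' = 0 -> curv_defect w x x w' = 0.
Proof.
move=> T_null x w w' x_null x_neq0 dw lw dw' lw'.
by rewrite /curv_defect /const_curv T_null // x_null lw'; ring.
Qed.

End CurvatureDefect.

Unset Implicit Arguments.
Theorem theorem1p2 (R : realType) (m : nat) (hm : (3 <= m)%N) (T : tensor4 R m) :
  is_acurv T ->
  (forall x : 'rV[R[i]]_m, nullC x -> \tr (jacobiC T x *m jacobiC T x) = 0) ->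
  exists c : R, forall x y z w : 'rV[R]_m,
    Rev T x y z w = c * (lip x w * lip y z - lip x z * lip y w).
Proof.
case: m hm T => [|[|[|n]]] // _ T hT trJ2.
pose j : 'I_n.+3 := Ordinal (isT : (1 < n.+3)%N).
have j0 : j != ord0 by [].
pose c := - Rev T (delta_mx 0 j) (delta_mx 0 ord0) (delta_mx 0 ord0) (delta_mx 0 j).
have defect_j00j :
    curv_defect T c (delta_mx 0 j) (delta_mx 0 ord0) (delta_mx 0 ord0) (delta_mx 0 j) = 0.
  rewrite /curv_defect /const_curv /c !lip_diag_form !diag_form_delta /=.
  by rewrite eta0 (eta_neq0 _ j0); ring.
exists c => x y z w; apply/eqP; rewrite -subr_eq0; apply/eqP.
have T_null := acurv_null_vanishing hT trJ2.
exact: (Q_eq0 (curv_defect_linear1 T c) (curv_defect_pair c hT) (curv_defect_anti c hT)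
  (curv_defect_bianchi c hT) (curv_defect_null c T_null) j0 defect_j00j x y z w).
Qed.
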